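(* Let $G$ be a graph of order $n$ with at least one edge, minimum degree $\delta$, and $\mu(G)=\mu$. If $(x_1,\ldots,x_n)$ is a unit eigenvector of the adjacency matrix of $G$ for the eigenvalue $\mu$, then \[ \min\{x_1,\ldots,x_n\}\leq\sqrt{\frac{\delta}{\mu^{2}+\delta n-\delta^{2}}}. \]
   Context: Graphs are finite and simple. $\mu(G)$ denotes the largest eigenvalue of the adjacency matrix of $G$. A unit eigenvector is one of Euclidean norm 1. *)

From mathcomp Require Import all_boot all_order all_algebra.
Set Implicit Arguments. Unset Strict Implicit. Unset Printing Implicit Defensive.
Import Order.TTheory GRing.Theory Num.Theory.
Local Open Scope ring_scope.

Definition simple_graph (n : nat) (e : rel 'I_n) : Prop :=
  (forall i j, e i j = e j i) /\ (forall i, ~~ e i i).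

Definition deg (n : nat) (e : rel 'I_n) (i : 'I_n) : nat := #|[set j | e i j]|.

Definition adjmx (R : nzRingType) (n : nat) (e : rel 'I_n) : 'M[R]_n :=
  \matrix_(i, j) (e i j)%:R.

Definition largest_eigenvalue (R : realFieldType) (n : nat) (A : 'M[R]_n) (mu : R) : Prop :=
  eigenvalue A mu /\ (forall a, eigenvalue A a -> a <= mu).

From mathcomp Require Import all_boot all_order all_algebra.
From mathcomp Require Import ring lra.
Set Implicit Arguments. Unset Strict Implicit. Unset Printing Implicit Defensive.
Import Order.TTheory GRing.Theory Num.Theory.
Local Open Scope ring_scope.

(* Let u be a vertex of degree delta, N its neighbourhood and m the
   least entry of x (we may assume m > 0). The eigen-equation at u gives
   mu x_u = sum_(k in N) x_k, so by Cauchy-Schwarz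
   mu^2 m^2 <= mu^2 x_u^2 <= delta sum_(k in N) x_k^2,
   while the n - delta entries outside N contribute at least (n - delta) m^2
   to the unit norm, so sum_(k in N) x_k^2 <= 1 - (n - delta) m^2. Hence
   m^2 (mu^2 + delta (n - delta)) <= delta. An edge and a positive x force
   mu > 0, so the denominator mu^2 + delta (n - delta) is positive. *)

Lemma sqr_sum_le_card_sum_sqr (R : realFieldType) (I : finType) (P : pred I)
    (f : I -> R) :
  (\sum_(i in P) f i) ^+ 2 <= #|P|%:R * \sum_(i in P) f i ^+ 2.
Proof.
set k : R := #|P|%:R; set S1 := \sum_(i in P) f i; set S2 := \sum_(i in P) f i ^+ 2.
have [P0|P_neq0] := eqVneq #|P| 0%N.
  by rewrite /S1 /k P0 (big_pred0 _ _ _ _ (card0_eq P0)) expr0n mul0r.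
have k_gt0 : 0 < k by rewrite ltr0n lt0n.
have var_ge0 : 0 <= \sum_(i in P) (k * f i - S1) ^+ 2.
  by apply: sumr_ge0 => i _; exact: sqr_ge0.
have var_expand : \sum_(i in P) (k * f i - S1) ^+ 2 = k * (k * S2 - S1 ^+ 2).
  have term i : (k * f i - S1) ^+ 2 = (k ^+ 2 * f i ^+ 2 - (2 * k * S1) * f i) + S1 ^+ 2.
    by ring.
  rewrite (eq_bigr _ (fun i _ => term i)) big_split /= sumrB sumr_const.
  by rewrite -!mulr_sumr -/S1 -/S2 -[S1 ^+ 2 *+ _]mulr_natr -/k; ring.
by move: var_ge0; rewrite var_expand pmulr_rge0 // subr_ge0.
Qed.

Lemma le_sqrt_div (R : rcfType) (m a b : R) :
  0 <= m -> 0 < b -> m ^+ 2 * b <= a -> m <= Num.sqrt (a / b).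
Proof.
move=> m_ge0 b_gt0 mb_le_a.
have a_ge0 : 0 <= a by apply: le_trans mb_le_a; rewrite mulr_ge0 ?sqr_ge0 ?ltW.
rewrite -(ger0_norm m_ge0) -sqrtr_sqr ler_sqrt ?divr_ge0 ?(ltW b_gt0) //.
by rewrite ler_pdivlMr.
Qed.

Section EigenvectorEntries.

Variables (R : realFieldType) (n : nat) (e : rel 'I_n).
Hypothesis e_sym : forall i j, e i j = e j i.
Variables (mu : R) (x : 'rV[R]_n).
Hypothesis x_eigen : x *m adjmx R e = mu *: x.

Lemma eigen_neighbour_sum j : mu * x 0 j = \sum_(k in [set k | e j k]) x 0 k.
Proof.
have := congr1 (fun M : 'M[R]_(1, n) => M 0 j) x_eigen; rewrite !mxE => <-.
rewrite [RHS]big_mkcond /=; apply: eq_bigr => k _.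
by rewrite /adjmx mxE inE e_sym; case: (e j k); rewrite ?mulr1 ?mulr0.
Qed.

Lemma eigenvalue_gt0_of_pos :
  (forall i, 0 < x 0 i) -> (exists i j, e i j) -> 0 < mu.
Proof.
move=> x_gt0 [i [j eij]].
have xi_le : x 0 i <= mu * x 0 j.
  rewrite eigen_neighbour_sum (bigD1 i) /=; last by rewrite inE e_sym.
  rewrite lerDl.
  by apply: sumr_ge0 => k _; exact: ltW.
by rewrite -(pmulr_lgt0 _ (x_gt0 j)); exact: lt_le_trans (x_gt0 i) xi_le.
Qed.

Lemma min_entry_sqr_bound u m :
  0 <= m -> (forall i, m <= x 0 i) ->
  m ^+ 2 * (mu ^+ 2 + (deg e u)%:R * (n%:R - (deg e u)%:R))
    <= (deg e u)%:R * \sum_i x 0 i ^+ 2.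
Proof.
move=> m_ge0 m_le; set d : R := (deg e u)%:R.
set N := [set j | e u j].
set S := \sum_(k in N) x 0 k ^+ 2.
set T := \sum_(k in ~: N) x 0 k ^+ 2.
have dN : d = #|N|%:R by [].
have d_ge0 : 0 <= d by exact: ler0n.
have norm_split : \sum_i x 0 i ^+ 2 = S + T.
  by rewrite (bigID (mem N)) /= /T; under [X in _ = _ + X]eq_bigl do rewrite in_setC.
have inside : (mu * x 0 u) ^+ 2 <= d * S.
  by rewrite eigen_neighbour_sum dN; exact: sqr_sum_le_card_sum_sqr.
have outside : (n%:R - d) * m ^+ 2 <= T.
  have card_out : #|~: N|%:R = n%:R - d :> R.
    by apply/eqP; rewrite dN eq_sym subr_eq -natrD eqr_nat addnC cardsC card_ord.
  rewrite -card_out mulr_natl -sumr_const ler_sum // => k _.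
  by rewrite ler_sqr ?nnegrE ?(le_trans m_ge0 (m_le k)).
have at_u : m ^+ 2 * mu ^+ 2 <= (mu * x 0 u) ^+ 2.
  rewrite exprMn mulrC ler_wpM2l ?sqr_ge0 // ler_sqr ?nnegrE //.
  exact: le_trans m_ge0 (m_le u).
have := ler_wpM2l d_ge0 outside.
rewrite norm_split mulrDr mulrDl mulrA [d * _]mulrC -mulrA; lra.
Qed.

End EigenvectorEntries.

Theorem lemma1 (R : rcfType) (n : nat) (e : rel 'I_n)
  (delta : nat) (mu : R) (x : 'rV[R]_n) (m : R) :
  simple_graph e ->
  (exists i j, e i j) ->
  (exists i, deg e i = delta) -> (forall i, (delta <= deg e i)%N) ->
  largest_eigenvalue (adjmx R e) mu ->
  x *m adjmx R e = mu *: x ->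
  \sum_(i < n) x 0 i ^+ 2 = 1 ->
  (exists i, x 0 i = m) -> (forall i, m <= x 0 i) ->
  m <= Num.sqrt (delta%:R / (mu ^+ 2 + (delta * n)%:R - (delta ^ 2)%:R)).
Proof.
move=> [e_sym _] has_edge [u deg_u] _ _ x_eigen x_unit _ m_le.
have [m_le0|m_gt0] := lerP m 0; first exact: le_trans m_le0 (sqrtr_ge0 _).
have mu_gt0 : 0 < mu.
  apply: (eigenvalue_gt0_of_pos e_sym x_eigen) => // i.
  exact: lt_le_trans m_gt0 (m_le i).
have delta_le_n : (delta <= n)%N by rewrite -deg_u -[n in (_ <= n)%N]card_ord max_card.
have -> : mu ^+ 2 + (delta * n)%:R - (delta ^ 2)%:R
          = mu ^+ 2 + delta%:R * (n%:R - delta%:R) :> R.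
  by rewrite natrM natrX; ring.
apply: le_sqrt_div; first exact: ltW.
  by rewrite ltr_wpDr ?exprn_gt0 // mulr_ge0 ?ler0n // subr_ge0 ler_nat.
have := min_entry_sqr_bound e_sym x_eigen u (ltW m_gt0) m_le.
by rewrite /= deg_u x_unit mulr1.
Qed.
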